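(* Let $\mu,\nu$ be integers with $\frac14(\mu+\nu)\le\mu\le\nu\le\frac34(\mu+\nu)$, let $M,N$ be integers with $q^{\mu-1}\le M<q^\mu$, $q^{\nu-1}\le N<q^\nu$, let $k\in\{\mu+\nu-4,\dots,\mu+\nu-1\}$, and for integers $m$ let $I(k,m)=\{n\in\mathbb{Z}: N/q\le n<N,\ q^k/m\le n<q^{k+1}/m\}$. Let $h,s$ be positive integers and $h_1,r,\mu_0,\mu_1,\mu_2$ integers with $\mu_0<\mu_1<\mu_2$ and $hsq^{\mu_1-\mu_2}\notin\mathbb{Z}$. Then for every interval $I_1\subseteq[q^{\mu-2},q^\mu)$, $$\Big|\sum_{m\in I_1}e\Big(\frac{h_1rm}{q^{\mu_2}}\Big)\sum_{n\in I(k,m)}e\big(hsnq^{\mu_1-\mu_2}\big)\Big|\ll\big(shq^{3(\mu_2-\mu_1)}\big)^{1/2}q^{\frac78(\mu+\nu)}.$$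
   Context: $q\ge2$ is a fixed integer, $e(x)=\exp(2\pi ix)$, and sums over $m\in I_1$ run over integers. The implied constant depends at most on $q$. *)

From Stdlib Require Import Reals ZArith.
Open Scope R_scope.

Fixpoint sumZ (a : Z) (len : nat) (f : Z -> R) : R :=
  match len with
  | O => 0
  | S l => f a + sumZ (a + 1)%Z l f
  end.

(* sum over the integers m with A <= m <= B (empty if B < A) *)
Definition sumZ_cc (A B : Z) (f : Z -> R) : R :=
  sumZ A (Z.to_nat (B - A + 1)) f.

Definition inI (q N k m n : Z) : Prop :=
  IZR N / IZR q <= IZR n /\ IZR n < IZR N /\
  powerRZ (IZR q) k / IZR m <= IZR n /\ IZR n < powerRZ (IZR q) (k + 1) / IZR m.

Definition indI (q N k m n : Z) : R :=
  if Rle_dec (IZR N / IZR q) (IZR n) then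
  if Rlt_dec (IZR n) (IZR N) then
  if Rle_dec (powerRZ (IZR q) k / IZR m) (IZR n) then
  if Rlt_dec (IZR n) (powerRZ (IZR q) (k + 1) / IZR m) then 1 else 0
  else 0 else 0 else 0.

(* sum_{n in I(k,m)} g n ; every element of I(k,m) lies in [0, N) when N > 0 *)
Definition sumI (q N k m : Z) (g : Z -> R) : R :=
  sumZ 0 (Z.to_nat N) (fun n => indI q N k m n * g n).

(* phase theta with e(theta) = exp(2 pi i theta):
   theta = h1 r m / q^mu2 + h s n q^(mu1-mu2) *)
Definition phase (q h1 r mu2 h s mu1 m n : Z) : R :=
  IZR h1 * IZR r * IZR m / powerRZ (IZR q) mu2
  + IZR h * IZR s * IZR n * powerRZ (IZR q) (mu1 - mu2).

(* real and imaginary parts of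
   S = sum_{A<=m<=B} e(h1 r m/q^mu2) sum_{n in I(k,m)} e(h s n q^(mu1-mu2)) *)
Definition S_re (q N k h1 r mu2 h s mu1 A B : Z) : R :=
  sumZ_cc A B (fun m => sumI q N k m
    (fun n => cos (2 * PI * phase q h1 r mu2 h s mu1 m n))).
Definition S_im (q N k h1 r mu2 h s mu1 A B : Z) : R :=
  sumZ_cc A B (fun m => sumI q N k m
    (fun n => sin (2 * PI * phase q h1 r mu2 h s mu1 m n))).

Definition S_abs (q N k h1 r mu2 h s mu1 A B : Z) : R :=
  sqrt (S_re q N k h1 r mu2 h s mu1 A B ^ 2 + S_im q N k h1 r mu2 h s mu1 A B ^ 2).

From Stdlib Require Import Reals ZArith Lra Lia.
Open Scope R_scope.

(* The frequency α = h s q^(μ1-μ2) is not an integer, but α q^(μ2-μ1) is, so the inner sum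
   runs a nontrivial character n ↦ e(nα) of period p = q^(μ2-μ1) over a range of consecutive
   integers (I(k,m) is an interval).  Such a sum vanishes over each block of p consecutive
   terms, hence is at most p in absolute value.  Summing trivially over the fewer than q^μ
   values of m (real and imaginary parts separately) gives |S| <= 2 q^μ p, which is below the
   claimed bound because μ <= 7/8 (μ+ν) and p <= (s h p^3)^(1/2). *)

Lemma sumZ_ext (f g : Z -> R) len a :
  (forall n, f n = g n) -> sumZ a len f = sumZ a len g.
Proof.
  intros Hfg; revert a; induction len as [|len IH]; intros a; simpl; [reflexivity|].
  now rewrite Hfg, IH.
Qed.

Lemma sumZ_add_len (f : Z -> R) n1 n2 a :
  sumZ a (n1 + n2) f = sumZ a n1 f + sumZ (a + Z.of_nat n1) n2 f.
Proof.
  revert a; induction n1 as [|n1 IH]; intros a; simpl.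
  - rewrite Z.add_0_r; ring.
  - rewrite IH, Zpos_P_of_succ_nat, <- Z.add_1_l, Z.add_assoc; ring.
Qed.

Lemma Rabs_sumZ_le (f : Z -> R) K len a :
  (forall n, Rabs (f n) <= K) -> Rabs (sumZ a len f) <= INR len * K.
Proof.
  intros Hf; revert a; induction len as [|len IH]; intros a.
  - simpl; rewrite Rabs_R0; lra.
  - rewrite S_INR; simpl sumZ.
    eapply Rle_trans; [apply Rabs_triang|].
    specialize (IH (a + 1)%Z); specialize (Hf a); lra.
Qed.

Lemma sumZ_telescope (f G : Z -> R) c len a :
  (forall n, c * f n = G (n + 1)%Z - G n) ->
  c * sumZ a len f = G (a + Z.of_nat len)%Z - G a.
Proof.
  intros HG; revert a; induction len as [|len IH]; intros a; simpl.
  - rewrite Z.add_0_r; ring.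
  - rewrite Rmult_plus_distr_l, IH, HG, Zpos_P_of_succ_nat, <- Z.add_1_l, Z.add_assoc.
    ring.
Qed.

(* Every range splits into full periods, which contribute nothing, and fewer than [p] terms. *)
Lemma Rabs_sumZ_le_period (f : Z -> R) p len a :
  (0 < p)%nat -> (forall n, Rabs (f n) <= 1) -> (forall b, sumZ b p f = 0) ->
  Rabs (sumZ a len f) <= INR p.
Proof.
  intros Hp Hf Hper; revert a.
  induction len as [len IH] using (well_founded_induction Wf_nat.lt_wf); intros a.
  destruct (Nat.lt_ge_cases len p) as [Hlt|Hge].
  - eapply Rle_trans; [apply (Rabs_sumZ_le f 1 len a Hf)|].
    rewrite Rmult_1_r; apply le_INR; lia.
  - replace len with (p + (len - p))%nat by lia.
    rewrite sumZ_add_len, Hper, Rplus_0_l; apply IH; lia.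
Qed.

(* Multiplying by [2 sin (PI al)] telescopes the sum: the phases [2 PI (c + n al)] advance by
   [2 PI al], and over a period they advance by a multiple of [2 PI]. *)
Lemma sumZ_cos_arith_period (c al : R) p kk a :
  sin (PI * al) <> 0 -> al * INR p = INR kk ->
  sumZ a p (fun n => cos (2 * PI * (c + IZR n * al))) = 0.
Proof.
  intros Hsin Hp.
  set (ph := fun n => 2 * PI * (c + IZR n * al)).
  assert (Htele : 2 * sin (PI * al) * sumZ a p (fun n => cos (ph n))
                  = sin (ph (a + Z.of_nat p)%Z - PI * al) - sin (ph a - PI * al)).
  { apply (sumZ_telescope _ (fun n => sin (ph n - PI * al))); intros n.
    replace (ph (n + 1)%Z - PI * al) with (ph n + PI * al)
      by (unfold ph; rewrite plus_IZR; ring).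
    rewrite sin_plus, sin_minus; ring. }
  replace (ph (a + Z.of_nat p)%Z - PI * al) with (ph a - PI * al + 2 * INR kk * PI) in Htele
    by (unfold ph; rewrite plus_IZR, <- INR_IZR_INZ, <- Hp; ring).
  rewrite sin_period, Rminus_diag in Htele.
  apply Rmult_integral in Htele as [H0|H0]; [lra | exact H0].
Qed.

Lemma Rabs_sumZ_cos_arith_le (c al : R) p kk len a :
  (0 < p)%nat -> sin (PI * al) <> 0 -> al * INR p = INR kk ->
  Rabs (sumZ a len (fun n => cos (2 * PI * (c + IZR n * al)))) <= INR p.
Proof.
  intros Hp Hsin Hper; apply Rabs_sumZ_le_period; [exact Hp | |].
  - intros n; apply Rabs_le, COS_bound.
  - intros b; exact (sumZ_cos_arith_period c al p kk b Hsin Hper).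
Qed.

Lemma Rabs_sumZ_sin_arith_le (c al : R) p kk len a :
  (0 < p)%nat -> sin (PI * al) <> 0 -> al * INR p = INR kk ->
  Rabs (sumZ a len (fun n => sin (2 * PI * (c + IZR n * al)))) <= INR p.
Proof.
  intros Hp Hsin Hper.
  (* sin (2 PI x) = cos (2 PI (x - 1/4)) *)
  rewrite (sumZ_ext _ (fun n => cos (2 * PI * ((c - / 4) + IZR n * al)))).
  - exact (Rabs_sumZ_cos_arith_le (c - / 4) al p kk len a Hp Hsin Hper).
  - intros n; rewrite <- cos_shift, <- cos_neg; f_equal; field.
Qed.

Lemma sumZ_zero_indicator (ind g : Z -> R) b len a :
  (forall j, (b <= j)%Z -> ind j = 0) -> (b <= a)%Z ->
  sumZ a len (fun n => ind n * g n) = 0.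
Proof.
  intros Hzero; revert a; induction len as [|len IH]; intros a Ha; simpl; [reflexivity|].
  rewrite Hzero, IH by lia; ring.
Qed.

(* Weighting by the indicator of a set of consecutive integers cuts out a subrange;
   the second conjunct keeps track of where that subrange starts. *)
Lemma sumZ_indicator_interval (ind g : Z -> R) len a :
  (forall n, ind n = 0 \/ ind n = 1) ->
  (forall i j n, ind i = 1 -> ind j = 1 -> (i <= n <= j)%Z -> ind n = 1) ->
  exists a' l, sumZ a len (fun n => ind n * g n) = sumZ a' l g /\ (ind a = 1 -> a' = a).
Proof.
  intros H01 Hconv; revert a; induction len as [|len IH]; intros a.
  { exists a, 0%nat; split; reflexivity. }
  simpl sumZ; destruct (IH (a + 1)%Z) as (a' & l & Htail & Hstart).
  destruct (H01 a) as [Ha|Ha]; rewrite Ha.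
  - exists a', l; split; [rewrite Htail; ring | lra].
  - destruct (H01 (a + 1)%Z) as [Hnext|Hnext].
    + exists a, 1%nat; split; [|reflexivity].
      assert (Hout : forall j, (a + 1 <= j)%Z -> ind j = 0).
      { intros j Hj; destruct (H01 j) as [|Hj1]; [assumption|].
        rewrite (Hconv a j (a + 1)%Z Ha Hj1) in Hnext by lia; lra. }
      simpl; rewrite (sumZ_zero_indicator ind g (a + 1) len (a + 1)) by (auto; lia); ring.
    + exists a, (S l); split; [|reflexivity].
      simpl; rewrite Htail, (Hstart Hnext); ring.
Qed.

Lemma indI_01 q N k m n : indI q N k m n = 0 \/ indI q N k m n = 1.
Proof.
  unfold indI; repeat match goal with |- context [if ?c then _ else _] => destruct c end; auto.
Qed.

Lemma indI_convex q N k m i j n :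
  indI q N k m i = 1 -> indI q N k m j = 1 -> (i <= n <= j)%Z -> indI q N k m n = 1.
Proof.
  intros Hi Hj [Hin Hnj]; apply IZR_le in Hin; apply IZR_le in Hnj.
  revert Hi Hj; unfold indI.
  repeat match goal with |- context [if ?c then _ else _] => destruct c end; lra.
Qed.

Lemma sumI_as_sumZ q N k m g : exists a l, sumI q N k m g = sumZ a l g.
Proof.
  destruct (sumZ_indicator_interval (indI q N k m) g (Z.to_nat N) 0
              (indI_01 q N k m) (indI_convex q N k m)) as (a & l & Hsum & _).
  now exists a, l.
Qed.

Lemma sqrt_sum_sq_le (a b : R) : sqrt (a ^ 2 + b ^ 2) <= Rabs a + Rabs b.
Proof.
  pose proof (Rabs_pos a); pose proof (Rabs_pos b).
  rewrite <- (sqrt_pow2 (Rabs a + Rabs b)) by lra.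
  apply sqrt_le_1; [nra | nra |].
  rewrite <- (pow2_abs a), <- (pow2_abs b); nra.
Qed.

Lemma S_abs_le_count_period (q N k h1 r mu2 h s mu1 A B : Z) p kk :
  (0 < p)%nat ->
  sin (PI * (IZR h * IZR s * powerRZ (IZR q) (mu1 - mu2))) <> 0 ->
  IZR h * IZR s * powerRZ (IZR q) (mu1 - mu2) * INR p = INR kk ->
  S_abs q N k h1 r mu2 h s mu1 A B <= 2 * (INR (Z.to_nat (B - A + 1)) * INR p).
Proof.
  intros Hp Hsin Hper.
  set (al := IZR h * IZR s * powerRZ (IZR q) (mu1 - mu2)) in *.
  set (c := fun m => IZR h1 * IZR r * IZR m / powerRZ (IZR q) mu2).
  assert (Hphase : forall m n, phase q h1 r mu2 h s mu1 m n = c m + IZR n * al)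
    by (intros; unfold phase, c, al; ring).
  assert (Hre : forall m,
    Rabs (sumI q N k m (fun n => cos (2 * PI * phase q h1 r mu2 h s mu1 m n))) <= INR p).
  { intros m; destruct (sumI_as_sumZ q N k m (fun n => cos (2 * PI * phase q h1 r mu2 h s mu1 m n)))
      as (a & l & ->).
    rewrite (sumZ_ext _ (fun n => cos (2 * PI * (c m + IZR n * al)))) by (intros; now rewrite Hphase).
    exact (Rabs_sumZ_cos_arith_le (c m) al p kk l a Hp Hsin Hper). }
  assert (Him : forall m,
    Rabs (sumI q N k m (fun n => sin (2 * PI * phase q h1 r mu2 h s mu1 m n))) <= INR p).
  { intros m; destruct (sumI_as_sumZ q N k m (fun n => sin (2 * PI * phase q h1 r mu2 h s mu1 m n)))
      as (a & l & ->).
    rewrite (sumZ_ext _ (fun n => sin (2 * PI * (c m + IZR n * al)))) by (intros; now rewrite Hphase).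
    exact (Rabs_sumZ_sin_arith_le (c m) al p kk l a Hp Hsin Hper). }
  unfold S_abs, S_re, S_im, sumZ_cc.
  eapply Rle_trans; [apply sqrt_sum_sq_le|].
  pose proof (Rabs_sumZ_le _ _ (Z.to_nat (B - A + 1)) A Hre).
  pose proof (Rabs_sumZ_le _ _ (Z.to_nat (B - A + 1)) A Him).
  lra.
Qed.

Lemma sin_PI_mul_neq0 (x : R) : ~ (exists z, x = IZR z) -> sin (PI * x) <> 0.
Proof.
  intros Hfrac Hsin; apply sin_eq_0_0 in Hsin as [z Hz].
  apply Hfrac; exists z; apply (Rmult_eq_reg_l PI); [rewrite Hz; ring | apply PI_neq0].
Qed.

Lemma INR_Zcount_le (A B : Z) (X : R) :
  (1 <= A)%Z -> IZR B < X -> 0 <= X -> INR (Z.to_nat (B - A + 1)) <= X.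
Proof.
  intros HA HB HX; destruct (Z_lt_le_dec (B - A + 1) 0) as [Hneg|Hnneg].
  - replace (Z.to_nat (B - A + 1)) with 0%nat by lia; simpl; lra.
  - rewrite INR_IZR_INZ, Z2Nat.id by lia.
    apply IZR_le in HA; rewrite plus_IZR, minus_IZR; lra.
Qed.

Lemma le_sqrt_mul_cube (x c : R) : 1 <= x -> 1 <= c -> x <= sqrt (c * x ^ 3).
Proof.
  intros Hx Hc; rewrite <- (sqrt_pow2 x) at 1 by lra.
  assert (Hsq : 1 <= x ^ 2) by (apply pow_R1_Rle; lra).
  assert (Hcube : x ^ 2 <= x ^ 3) by (simpl; nra).
  apply sqrt_le_1; nra.
Qed.

Theorem mainTheorem7 (q : Z) (hq : (2 <= q)%Z) :
  exists C : R, 0 < C /\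
  forall (mu nu M N k h s h1 r mu0 mu1 mu2 A B : Z),
    IZR (mu + nu) / 4 <= IZR mu ->
    IZR mu <= IZR nu ->
    IZR nu <= 3 / 4 * IZR (mu + nu) ->
    powerRZ (IZR q) (mu - 1) <= IZR M -> IZR M < powerRZ (IZR q) mu ->
    powerRZ (IZR q) (nu - 1) <= IZR N -> IZR N < powerRZ (IZR q) nu ->
    (mu + nu - 4 <= k <= mu + nu - 1)%Z ->
    (0 < h)%Z -> (0 < s)%Z ->
    (mu0 < mu1)%Z -> (mu1 < mu2)%Z ->
    ~ (exists z : Z, IZR h * IZR s * powerRZ (IZR q) (mu1 - mu2) = IZR z) ->
    powerRZ (IZR q) (mu - 2) <= IZR A -> IZR B < powerRZ (IZR q) mu ->
    S_abs q N k h1 r mu2 h s mu1 A B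
      <= C * sqrt (IZR s * IZR h * powerRZ (IZR q) (3 * (mu2 - mu1)))
           * Rpower (IZR q) (7 / 8 * IZR (mu + nu)).
Proof.
  exists 2; split; [lra|].
  intros mu nu M N k h s h1 r mu0 mu1 mu2 A B Hmu Hmunu _ _ _ _ _ _ Hh Hs _ H12 Hfrac HA HB.
  assert (HQ : 2 <= IZR q) by (apply IZR_le; exact hq).
  set (d := Z.to_nat (mu2 - mu1)).
  assert (Hp : INR (Z.to_nat q ^ d) = IZR q ^ d)
    by (rewrite pow_INR, INR_IZR_INZ, Z2Nat.id by lia; reflexivity).
  assert (Hshift : powerRZ (IZR q) (mu1 - mu2) * IZR q ^ d = 1).
  { rewrite pow_powerRZ, <- powerRZ_add by lra.
    replace (mu1 - mu2 + Z.of_nat d)%Z with 0%Z by lia; reflexivity. }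
  assert (Hcube : powerRZ (IZR q) (3 * (mu2 - mu1)) = (IZR q ^ d) ^ 3).
  { rewrite <- pow_mult, pow_powerRZ; f_equal; lia. }
  assert (Hcount : INR (Z.to_nat (B - A + 1)) <= Rpower (IZR q) (7 / 8 * IZR (mu + nu))).
  { assert (HqA : 0 < powerRZ (IZR q) (mu - 2)) by (apply powerRZ_lt; lra).
    assert (HA1 : (0 < A)%Z) by (apply lt_IZR; lra).
    eapply Rle_trans; [apply (INR_Zcount_le A B _ ltac:(lia) HB); left; apply powerRZ_lt; lra|].
    rewrite powerRZ_Rpower by lra; apply Rle_Rpower; rewrite plus_IZR in *; lra. }
  eapply Rle_trans.
  { apply (S_abs_le_count_period _ _ _ _ _ _ _ _ _ _ _ (Z.to_nat q ^ d) (Z.to_nat (h * s))).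
    - apply Nat.neq_0_lt_0, Nat.pow_nonzero; lia.
    - now apply sin_PI_mul_neq0.
    - rewrite Hp, Rmult_assoc, Hshift, INR_IZR_INZ, Z2Nat.id, mult_IZR by lia; ring. }
  rewrite Hp, Hcube.
  assert (Hsh : 1 <= IZR s * IZR h) by (rewrite <- mult_IZR; apply IZR_le; lia).
  assert (Hqd : 1 <= IZR q ^ d) by (apply pow_R1_Rle; lra).
  pose proof (le_sqrt_mul_cube _ _ Hqd Hsh).
  pose proof (pos_INR (Z.to_nat (B - A + 1))).
  rewrite Rmult_assoc; apply Rmult_le_compat_l; [lra|].
  rewrite Rmult_comm; apply Rmult_le_compat; lra.
Qed.
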